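(* The signature of the bilinear form $\eta^+$ on $V_q^+$ is $\operatorname{sg}(\eta^+)=\frac12\sum_{n=1}^{r-1}\epsilon_n$, and $\operatorname{sg}(\eta^+)=\operatorname{sg}_{V_q^+}(\Omega^+)$, the signature of the quadratic form $(x,y)\mapsto\operatorname{tr}_{V_q^+}(\Omega^+xy)$.
   Context: Let $r\ge3$ and $s$ be coprime odd integers with $0<s<r$, $q=\exp(i\pi s/r)$, and $\epsilon_n=(-1)^{\lfloor ns/r\rfloor}$ for $1\le n\le r-1$ (the sign of $[n]=\frac{q^n-q^{-n}}{q-q^{-1}}$; note $\epsilon_n=\epsilon_{r-n}$). $V_q^+$ is the SO$_3$ signed Verlinde algebra: the commutative semisimple $\mathbb{Q}$-algebra with basis $e_0,e_2,\dots,e_{r-3}$ (the even part of the signed Verlinde algebra $V_q$), a Frobenius algebra whose form $\eta^+(x,y)=\epsilon^+(xy)$ is diagonal in this basis with $\eta^+(e_{2n},e_{2n})=\epsilon_{2n+1}$, and $\Omega^+=\sum_n\epsilon_{2n+1}e_{2n}^2$. $\operatorname{tr}_{V}(a)$ denotes the trace of multiplication by $a$. *)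

From HB Require Import structures.
From mathcomp Require Import all_boot all_order all_algebra.
Set Implicit Arguments. Unset Strict Implicit. Unset Printing Implicit Defensive.
Import Order.TTheory GRing.Theory Num.Theory.
Local Open Scope ring_scope.

(* epsilon_n = (-1)^floor(n s / r), the sign of the quantum integer [n] at q = exp(i pi s/r) *)
Definition eps (r s n : nat) : int := if odd ((n * s) %/ r)%N then -1 else 1.

(* A finite-dimensional Q-algebra structure on 'rV[rat]_m given by structure
   constants: c i j = e_i * e_j (coordinates in the basis e_0..e_{m-1}). *)
Definition basisV (m : nat) (i : 'I_m) : 'rV[rat]_m := delta_mx 0 i.

Definition mulV (m : nat) (c : 'I_m -> 'I_m -> 'rV[rat]_m) (x y : 'rV[rat]_m)
  : 'rV[rat]_m := \sum_(i < m) \sum_(j < m) (x 0 i * y 0 j) *: c i j.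

Definition powV (m : nat) (c : 'I_m -> 'I_m -> 'rV[rat]_m) (one x : 'rV[rat]_m)
  (n : nat) : 'rV[rat]_m := iter n (mulV c x) one.

Definition Lmat (m : nat) (c : 'I_m -> 'I_m -> 'rV[rat]_m) (a : 'rV[rat]_m)
  : 'M[rat]_m := \matrix_(j < m, k < m) (mulV c a (basisV j)) 0 k.

Definition trV (m : nat) (c : 'I_m -> 'I_m -> 'rV[rat]_m) (a : 'rV[rat]_m) : rat :=
  \tr (Lmat c a).

Definition linfun_of (m : nat) (f x : 'rV[rat]_m) : rat := \sum_(k < m) x 0 k * f 0 k.

(* Signature of the symmetric bilinear form with Gram matrix A:
   (#positive - #negative) diagonal entries of a congruent diagonal matrix
   (well defined by Sylvester's law of inertia). *)
Definition signature_is (m : nat) (A : 'M[rat]_m) (x : rat) : Prop :=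
  exists P : 'M[rat]_m,
    [/\ P \in unitmx, is_diag_mx (P *m A *m P^T) &
        x = (#|[set i : 'I_m | 0 < (P *m A *m P^T) i i]|%:R
             - #|[set i : 'I_m | (P *m A *m P^T) i i < 0]|%:R)].

From HB Require Import structures.
From mathcomp Require Import all_boot all_order all_algebra.
From mathcomp Require Import zify ring.
Import Order.TTheory GRing.Theory Num.Theory.
Local Open Scope ring_scope.
Set Implicit Arguments. Unset Strict Implicit.

(* Write m = (r-1)/2, e_i for the basis vector e_{2i}, L_a for the matrix of
   multiplication by a, and cu for the counit, so that eta(x,y) = cu(xy).

   1. The Gram matrix of eta is diag(eps_1, eps_3, ..., eps_{r-2}), so its
      signature is sum_i eps_{2i+1}; the symmetry eps_{r-n} = eps_n matches
      each even index with an odd one, so this sum is half of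
      sum_{n=1}^{r-1} eps_n.
   2. Orthogonality of the basis gives coordinates x_k = eps_{2k+1} cu(x e_k),
      hence the trace formula tr(L_a) = cu(a Omega).  Consequently
      tr(Omega x y) = cu((Omega x)(Omega y)), i.e. the Gram matrix of the
      trace form is L_Omega G L_Omega^T, with G the Gram matrix of eta.
   3. Omega is invertible because the algebra is reduced: if Omega v = 0, the
      Fitting idempotent E = L_v p(L_v) of L_v is multiplication by an element
      of the ideal (v), so tr E = cu(w v Omega) = 0; but tr E = rank E,
      hence E = 0, L_v is nilpotent and v = 0.
   So the trace form is congruent to eta and has the same signature. *)

(* The trace of an idempotent matrix is its rank: factor E = C R through its
   rank, then R C = 1 and tr E = tr (R C). *)
Lemma mxtrace_idem (F : fieldType) k (E : 'M[F]_k) :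
  E *m E = E -> \tr E = (\rank E)%:R.
Proof.
move=> EE; set C := col_base E; set R := row_base E.
have CR : C *m R = E by rewrite mulmx_base.
have CRC : C *m R *m C = C.
  apply: (row_free_inj (row_base_free E)).
  by rewrite -/R -(mulmxA (C *m R)) CR EE.
have RC : R *m C = 1%:M.
  have CTfree : row_free C^T by rewrite /row_free mxrank_tr; exact: col_base_full.
  apply: trmx_inj; apply: (row_free_inj CTfree).
  by rewrite -!trmx_mul mulmxA CRC mulmx1.
by rewrite -{1}CR mxtrace_mulC RC mxtrace1.
Qed.

(* Fitting idempotent: for every square matrix B there are a polynomial p and
   an exponent k such that E = B p(B) is idempotent and fixes B^k; writing
   chi_B = q X^k with q(0) <> 0, take E = u(B)^(k+1) with u = 1 - q/q(0). *)
Lemma fitting_idempotent (F : fieldType) n (B : 'M[F]_n.+1) :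
  exists (p : {poly F}) (k : nat),
    let E := horner_mx B ('X * p) in E * E = E /\ E * B ^+ k = B ^+ k.
Proof.
have [k [q /implyP q0 chiE]] := multiplicity_XsubC (char_poly B) 0.
have {q0} q0 : q.[0] != 0 by apply: q0; exact: monic_neq0 (char_poly_monic B).
rewrite subr0 in chiE.
pose u := 1 - (q.[0]^-1)%:P * q.
have /factor_theorem [p uE] : root u 0 by rewrite /root !hornerE mulVf ?subrr.
rewrite subr0 in uE.
have hBX : horner_mx B 'X^k = B ^+ k by rewrite rmorphXn /= horner_mx_X.
have hBuX j : horner_mx B (u ^+ j * 'X^k) = B ^+ k.
  have uXk : horner_mx B (u * 'X^k) = B ^+ k.
    rewrite /u mulrBl mul1r -mulrA -chiE rmorphB rmorphM /= Cayley_Hamilton.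
    by rewrite mulr0 subr0.
  elim: j => [|j IHj]; first by rewrite expr0 mul1r.
  by rewrite exprSr -mulrA rmorphM /= uXk -{1}hBX -rmorphM.
exists ('X^k * p ^+ k.+1), k => E.
have EE : E = horner_mx B (u ^+ k.+1).
  by rewrite /E uE exprMn mulrA -exprS mulrC.
split; last by rewrite EE -{1}hBX -rmorphM /= hBuX.
rewrite {2}/E mulrCA rmorphM /= mulrA EE -rmorphM /= hBuX -hBX -rmorphM /= -EE.
by rewrite /E mulrCA.
Qed.

Lemma signature_sign_diag m (A P : 'M[rat]_m) (d : 'I_m -> rat) :
  P \in unitmx -> P *m A *m P^T = diag_mx (\row_i d i) ->
  (forall i, d i = 1 \/ d i = -1) -> signature_is A (\sum_i d i).
Proof.
move=> Pu PAP d_sign; exists P; rewrite PAP; split => //.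
have card_count (Q : pred 'I_m) : #|[set i | Q i]|%:R = \sum_i (Q i)%:R :> rat.
  rewrite -sum1_card natr_sum big_mkcond /=.
  by apply: eq_bigr => i _; rewrite inE; case: (Q i).
rewrite !card_count -sumrB; apply: eq_bigr => i _; rewrite !mxE eqxx mulr1n.
by case: (d_sign i) => ->; rewrite ?ltr01 ?ltr10 ?ltrN10 ?ltr0N1 /=.
Qed.

Lemma mulV_is_bilinear m (c : 'I_m -> 'I_m -> 'rV[rat]_m) :
  bilinear_for (GRing.Scale.Law.clone _ _ *:%R _) (GRing.Scale.Law.clone _ _ *:%R _)
    (mulV c).
Proof.
split=> [y|x] a u v /=; rewrite /mulV scaler_sumr -big_split; apply: eq_bigr => i _;
  rewrite scaler_sumr -big_split; apply: eq_bigr => j _ /=;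
  by rewrite !mxE scalerA -scalerDl; congr (_ *: _); ring.
Qed.

HB.instance Definition _ (m : nat) (c : 'I_m -> 'I_m -> 'rV[rat]_m) :=
  bilinear_isBilinear.Build rat 'rV[rat]_m 'rV[rat]_m 'rV[rat]_m _ _ (@mulV m c)
    (@mulV_is_bilinear m c).

Lemma linfun_of_is_linear m (f : 'rV[rat]_m) : linear_for *%R (linfun_of f).
Proof.
move=> a x y; rewrite /linfun_of mulr_sumr -big_split; apply: eq_bigr => k _.
by rewrite !mxE mulrDl mulrA.
Qed.

HB.instance Definition _ (m : nat) (f : 'rV[rat]_m) :=
  GRing.isLinear.Build rat 'rV[rat]_m rat _ (@linfun_of m f) (@linfun_of_is_linear m f).

Lemma Lmat_is_linear m (c : 'I_m -> 'I_m -> 'rV[rat]_m) : linear (Lmat c).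
Proof. by move=> a x y; apply/matrixP => i j; rewrite !mxE linearPl !mxE. Qed.

HB.instance Definition _ (m : nat) (c : 'I_m -> 'I_m -> 'rV[rat]_m) :=
  GRing.isLinear.Build rat 'rV[rat]_m 'M[rat]_m _ (@Lmat m c) (@Lmat_is_linear m c).

Section ReducedFrobeniusAlgebra.
Variables (n : nat) (c : 'I_n.+1 -> 'I_n.+1 -> 'rV[rat]_n.+1) (one cu : 'rV[rat]_n.+1).
Local Notation mul := (mulV c).
Local Notation L := (Lmat c).
Local Notation eta := (linfun_of cu).
Local Notation e := basisV.

Lemma row_Lmat a j : row j (L a) = mul a (e j).
Proof. by apply/rowP => k; rewrite !mxE. Qed.

Lemma mul_Lmat a x : x *m L a = mul a x.
Proof.
rewrite mulmx_sum_row {2}(row_sum_delta x) linear_sumr; apply: eq_bigr => i _.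
by rewrite row_Lmat linearZr_LR.
Qed.

Hypothesis mulC : forall x y, mul x y = mul y x.
Hypothesis mulA : forall x y z, mul (mul x y) z = mul x (mul y z).
Hypothesis mul1 : forall x, mul one x = x.

Lemma LmatM a b : L (mul a b) = L b *m L a.
Proof. by apply/row_matrixP => j; rewrite row_mul !row_Lmat mul_Lmat mulA. Qed.

Lemma Lmat1 : L one = 1%:M.
Proof. by apply/row_matrixP => j; rewrite row_Lmat mul1 row1. Qed.

Lemma horner_Lmat y (p : {poly rat}) : exists z, horner_mx (L y) p = L z.
Proof.
elim/poly_ind: p => [|p a [z IHz]]; first by exists 0; rewrite rmorph0 linear0.
exists (mul y z + a *: one).
rewrite rmorphD rmorphM /= horner_mx_X horner_mx_C IHz linearD linearZ /= Lmat1.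
by rewrite LmatM mulmxE scalemx1.
Qed.

Hypothesis reduced : forall x k, powV c one x k = 0 -> x = 0.

(* Reducedness: an element with nilpotent multiplication operator is zero,
   since one L_x^k = x^k. *)
Lemma Lmat_nilpotent x k : L x ^+ k = 0 -> x = 0.
Proof.
have one_pow j : one *m L x ^+ j = powV c one x j.
  elim: j => [|j IHj]; first by rewrite expr0 mulmx1.
  by rewrite exprSr -mulmxE mulmxA IHj mul_Lmat.
by move=> Lxk0; apply: (@reduced x k); rewrite -one_pow Lxk0 mulmx0.
Qed.

Variable ep : 'I_n.+1 -> rat.
Hypothesis ep_sign : forall i, ep i = 1 \/ ep i = -1.
Hypothesis frob : forall i j, eta (mul (e i) (e j)) = if i == j then ep i else 0.

Lemma coord_frob (x : 'rV[rat]_n.+1) k : x 0 k = ep k * eta (mul x (e k)).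
Proof.
rewrite {2}(row_sum_delta x) linear_sumlz linear_sum (bigD1 k) //= big1 => [|i ik].
  rewrite linearZl_LR linearZ_LR /= frob eqxx addr0 mulrCA.
  by case: (ep_sign k) => ->; rewrite ?mulrNN mulr1.
by rewrite linearZl_LR linearZ_LR /= frob (negbTE ik) mulr0.
Qed.

Definition Omega := \sum_i ep i *: mul (e i) (e i).

Lemma trV_frob a : trV c a = eta (mul a Omega).
Proof.
rewrite /trV /mxtrace /Omega linear_sumr linear_sum; apply: eq_bigr => i _ /=.
by rewrite mxE coord_frob mulA linearZr_LR linearZ_LR.
Qed.

(* Omega is not a zero divisor: the Fitting idempotent of L_v lies in the ideal
   (v), so its trace, which is its rank, vanishes. *)
Lemma Omega_annihilator v : mul Omega v = 0 -> v = 0.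
Proof.
move=> Omega_v; have [p [k /=]] := fitting_idempotent (L v).
set E := horner_mx _ _ => -[EE EBk].
have [w Lw] := horner_Lmat v p.
have EL : E = L (mul w v) by rewrite /E rmorphM /= horner_mx_X Lw LmatM mulmxE.
have trE : \tr E = 0.
  rewrite EL; change (trV c (mul w v) = 0).
  by rewrite trV_frob mulA (mulC v) Omega_v linear0r linear0.
have /eqP : (\rank E)%:R = 0 :> rat by rewrite -mxtrace_idem ?mulmxE.
rewrite pnatr_eq0 mxrank_eq0 => /eqP E0.
by apply: (Lmat_nilpotent (k := k)); rewrite -EBk E0 mul0r.
Qed.

Lemma Omega_unit : L Omega \in unitmx.
Proof.
rewrite -row_free_unit; apply: inj_row_free => v.
by rewrite mul_Lmat; exact: Omega_annihilator.
Qed.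

Lemma eta_expand (x y : 'rV[rat]_n.+1) :
  eta (mul x y) = \sum_k \sum_l x 0 k * y 0 l * eta (mul (e k) (e l)).
Proof.
rewrite {1}(row_sum_delta x) linear_sumlz linear_sum; apply: eq_bigr => k _ /=.
rewrite linearZl_LR linearZ_LR {1}(row_sum_delta y) linear_sumr linear_sum /= mulr_sumr.
by apply: eq_bigr => l _; rewrite linearZr_LR linearZ_LR mulrA.
Qed.

Definition eta_gram := \matrix_(i, j) eta (mul (e i) (e j)).

Lemma eta_gram_diag : eta_gram = diag_mx (\row_i ep i).
Proof.
apply/matrixP => i j; rewrite !mxE frob.
by case: (i == j); rewrite ?mulr1n ?mulr0n.
Qed.

(* tr(Omega x y) = eta(Omega x, Omega y): the trace form is L_Omega G L_Omega^T. *)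
Lemma trace_gram :
  \matrix_(i, j) trV c (mul Omega (mul (e i) (e j))) = L Omega *m eta_gram *m (L Omega)^T.
Proof.
apply/matrixP => i j; rewrite !mxE trV_frob.
have -> : mul (mul Omega (mul (e i) (e j))) Omega = mul (mul Omega (e i)) (mul Omega (e j)).
  by rewrite -mulA (mulC Omega (e i)) !mulA (mulC (e j) Omega).
rewrite eta_expand exchange_big; apply: eq_bigr => l _; rewrite !mxE mulr_suml.
by apply: eq_bigr => k _; rewrite !mxE mulrAC.
Qed.

(* Both forms have signature sum_i eps_{2i+1}; the trace form is congruent to
   eta because L_Omega is invertible. *)
Lemma frobenius_signatures :
  signature_is eta_gram (\sum_i ep i) /\
  signature_is (\matrix_(i, j) trV c (mul Omega (mul (e i) (e j)))) (\sum_i ep i).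
Proof.
split.
  apply: (signature_sign_diag (P := 1%:M)); rewrite ?unitmx1 //.
  by rewrite mul1mx trmx1 mulmx1 eta_gram_diag.
apply: (signature_sign_diag (P := invmx (L Omega))); rewrite ?unitmx_inv ?Omega_unit //.
rewrite trace_gram !mulmxA mulVmx ?Omega_unit // mul1mx -mulmxA -trmx_mul.
by rewrite mulVmx ?Omega_unit // trmx1 mulmx1 eta_gram_diag.
Qed.

End ReducedFrobeniusAlgebra.

Lemma eps_sign r s n : (eps r s n)%:~R = 1 :> rat \/ (eps r s n)%:~R = -1 :> rat.
Proof. by rewrite /eps; case: ifP => _; [right | left]. Qed.

(* eps_{r-n} = eps_n: if ns = qr + t with 0 < t < r (r does not divide ns),
   then (r-n)s = (s-q-1)r + (r-t), and s - q - 1 has the parity of q. *)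
Lemma eps_sym r s n :
  odd s -> coprime r s -> (0 < n < r)%N -> eps r s (r - n) = eps r s n.
Proof.
move=> s_odd rs_coprime /andP[n_gt0 n_lt_r].
set q := (n * s %/ r)%N; set t := (n * s %% r)%N.
have nsE : (n * s = q * r + t)%N by rewrite /q /t -divn_eq.
have t_lt_r : (t < r)%N by rewrite ltn_mod; lia.
have t_gt0 : (0 < t)%N.
  rewrite lt0n; apply/negP => /eqP t0.
  have : (r %| n * s)%N by apply/dvdnP; exists q; rewrite nsE t0 addn0.
  by rewrite Gauss_dvdl // => /dvdn_leq; lia.
have q_lt_s : (q < s)%N.
  have s_gt0 : (0 < s)%N by rewrite lt0n; apply: contraTneq s_odd => ->.
  rewrite -(ltn_pmul2r (_ : 0 < r)%N); last by lia.
  have : (n * s < r * s)%N by rewrite ltn_pmul2r.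
  lia.
have rnsE : ((r - n) * s = (s - q - 1) * r + (r - t))%N by rewrite mulnBl mulnC nsE; nia.
rewrite /eps rnsE divnMDl; last by lia.
rewrite divn_small ?addn0; last by lia.
rewrite -subnDA oddB; last by lia.
by rewrite s_odd oddD; case: (odd q).
Qed.

Lemma sum_odd_even (f : nat -> rat) m :
  \sum_(1 <= k < (2 * m).+1) f k = \sum_(i < m) (f (2 * i).+1 + f (2 * i).+2).
Proof.
elim: m => [|m IHm]; first by rewrite big_ord0 big_geq.
rewrite big_ord_recr /= -IHm.
have -> : (2 * m.+1).+1 = (2 * m).+1.+2 by rewrite mulnS.
by rewrite big_nat_recr //= big_nat_recr //= addrA.
Qed.

(* (1/2) sum_{n=1}^{r-1} eps_n = sum_{i<m} eps_{2i+1}, the even terms being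
   matched with the odd ones by n |-> r - n. *)
Lemma half_sum_eps r s :
  odd r -> odd s -> coprime r s ->
  2^-1 * \sum_(1 <= n < r) (eps r s n)%:~R
  = \sum_(i < (r.-1)./2) ((eps r s (2 * i).+1)%:~R : rat).
Proof.
move=> r_odd s_odd rs_coprime.
have rE : r = (2 * (r.-1)./2).+1.
  case: r r_odd {s_odd rs_coprime} => //= r1 r1_even.
  by rewrite -[in LHS](odd_double_half r1) (negbTE r1_even) -mul2n.
set m := (r.-1)./2 in rE *.
rewrite rE sum_odd_even -rE big_split /=.
have -> : \sum_(i < m) ((eps r s (2 * i).+2)%:~R : rat)
          = \sum_(i < m) (eps r s (2 * i).+1)%:~R.
  rewrite (reindex_inj rev_ord_inj) /=; apply: eq_bigr => i _.
  have i_lt_m := ltn_ord i.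
  have -> : (2 * (m - i.+1)).+2 = (r - (2 * i).+1)%N by lia.
  by rewrite eps_sym //; lia.
by set x := \sum_(i < m) _; field.
Qed.

Theorem mainTheorem14 (r s : nat)
  (c : 'I_((r.-1)./2) -> 'I_((r.-1)./2) -> 'rV[rat]_((r.-1)./2))
  (one cu : 'rV[rat]_((r.-1)./2)) :
  (3 <= r)%N -> odd r -> odd s -> (0 < s < r)%N -> coprime r s ->
  (forall x y, mulV c x y = mulV c y x) ->
  (forall x y z, mulV c (mulV c x y) z = mulV c x (mulV c y z)) ->
  (forall x, mulV c one x = x) ->
  (forall x n, powV c one x n = 0 -> x = 0) ->
  (forall i j, linfun_of cu (mulV c (basisV i) (basisV j))
               = if i == j then (eps r s (2 * i).+1)%:~R else 0) ->
  let Omega := \sum_(i < (r.-1)./2)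
                 (eps r s (2 * i).+1)%:~R *: mulV c (basisV i) (basisV i) in
  let etaG := \matrix_(i, j) linfun_of cu (mulV c (basisV i) (basisV j)) in
  let trG := \matrix_(i, j) trV c (mulV c Omega (mulV c (basisV i) (basisV j))) in
  let sg := 2^-1 * \sum_(1 <= n < r) (eps r s n)%:~R in
  signature_is etaG sg /\ signature_is trG sg.
Proof.
move=> r_ge3 r_odd s_odd _ rs_coprime.
rewrite /= half_sum_eps //.
have [n dimE] : exists n, (r.-1)./2 = n.+1.
  by exists (r.-1)./2.-1; rewrite prednK // half_gt0; lia.
move: c one cu; rewrite dimE => c one cu mulC mulA mul1 reduced frob.
exact: (frobenius_signatures mulC mulA mul1 reduced (fun i => eps_sign r s (2 * i).+1) frob).
Qed.
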